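(* Let $n\ge1$. For each $i\in\{1,\dots,n\}$ let $\mathbf{r}_i(1),\mathbf{r}_i(2),\dots,\mathbf{r}_i(L_i)$ be a path of pairwise distinct lattice sites with $\mathbf{r}_i(1)$ equal to the origin and $L_i\ge n$. A configuration is a choice of sticking times $\tau_i\in\{1,\dots,L_i\}$, with labels $\mathbf{s}_i=\mathbf{r}_i(\tau_i)$. Call it well-ordered if for all $i,j$ and all $t<\tau_i$, $\mathbf{s}_j=\mathbf{r}_i(t)$ implies $j<i$. Let the cluster $S$ be the set of live sites $\{\mathbf{r}_i(t): 1\le i\le n,\ t\le\tau_i\}$. Call the configuration singly-occupied if every site of $S$ equals $\mathbf{s}_j$ for exactly one $j$. Then there is exactly one configuration that is both well-ordered and singly-occupied. It is the sequential-dynamics configuration: for each $i$ in increasing order, $\tau_i$ is the least $t$ such that $\mathbf{r}_i(t)\notin\{\mathbf{s}_1,\dots,\mathbf{s}_{i-1}\}$. *)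

From mathcomp Require Import all_boot all_order all_algebra.
Set Implicit Arguments. Unset Strict Implicit. Unset Printing Implicit Defensive.
Import Order.TTheory GRing.Theory Num.Theory.
Local Open Scope ring_scope.

Definition site (d : nat) := 'rV[int]_d.

Definition lattice_adj (d : nat) (x y : site d) : Prop :=
  (\sum_(k < d) `|x 0 k - y 0 k|)%R = 1.

(* Walker i (i : 'I_n, i.e. walkers numbered 0..n-1) follows the path
   r i 1, ..., r i (L i); times are 1-based natural numbers. *)
Definition is_path (d : nat) (r : nat -> site d) (Li : nat) : Prop :=
  r 1%N = 0 /\
  (forall t, (1 <= t)%N -> (t < Li)%N -> lattice_adj (r t) (r t.+1)) /\
  (forall t t', (1 <= t <= Li)%N -> (1 <= t' <= Li)%N -> r t = r t' -> t = t').

Definition is_config (n : nat) (L : 'I_n -> nat) (tau : 'I_n -> nat) : Prop :=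
  forall i, (1 <= tau i <= L i)%N.

Definition label (d n : nat) (r : 'I_n -> nat -> site d) (tau : 'I_n -> nat)
  (i : 'I_n) : site d := r i (tau i).

Definition well_ordered (d n : nat) (r : 'I_n -> nat -> site d)
  (tau : 'I_n -> nat) : Prop :=
  forall (i j : 'I_n) (t : nat), (1 <= t)%N -> (t < tau i)%N ->
    label r tau j = r i t -> (j < i)%N.

Definition in_cluster (d n : nat) (r : 'I_n -> nat -> site d)
  (tau : 'I_n -> nat) (x : site d) : Prop :=
  exists (i : 'I_n) (t : nat), (1 <= t <= tau i)%N /\ x = r i t.

Definition singly_occupied (d n : nat) (r : 'I_n -> nat -> site d)
  (tau : 'I_n -> nat) : Prop :=
  forall x, in_cluster r tau x -> exists! j : 'I_n, x = label r tau j.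

Definition sequential (d n : nat) (r : 'I_n -> nat -> site d)
  (tau : 'I_n -> nat) : Prop :=
  forall i : 'I_n,
    (1 <= tau i)%N /\
    (forall j : 'I_n, (j < i)%N -> r i (tau i) <> label r tau j) /\
    (forall t, (1 <= t)%N -> (t < tau i)%N ->
       exists j : 'I_n, (j < i)%N /\ r i t = label r tau j).

From mathcomp Require Import all_boot all_order all_algebra.
Set Implicit Arguments. Unset Strict Implicit. Unset Printing Implicit Defensive.

(* Walker i only has to avoid the i earlier labels, so by injectivity of its
   path the sequential dynamics lets it stick within its first i+1 <= n <= L_i
   steps.  The sequential labels are pairwise distinct, which yields
   well-ordering and single occupancy.  Conversely, compare a well-ordered,
   singly-occupied configuration with the sequential one walker by walker:
   sticking earlier would land on an earlier label (a doubly occupied site),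
   while sticking later would pass over the sequential site of walker i, which
   single occupancy makes some label and well-ordering an earlier walker's
   label, contradicting the choice of the sequential sticking time. *)

Lemma exists_first_notin (T : eqType) (g : nat -> T) (s : seq T) (m : nat) :
  (forall t t', (1 <= t <= m.+1)%N -> (1 <= t' <= m.+1)%N -> g t = g t' -> t = t') ->
  (size s <= m)%N ->
  exists t0, [/\ (1 <= t0 <= m.+1)%N, g t0 \notin s &
    forall t, (1 <= t)%N -> (t < t0)%N -> g t \in s].
Proof.
move=> g_inj size_s.
have avoid : has (fun t => g t \notin s) (iota 1 m.+1).
  apply: contraLR size_s => /hasPn all_in; rewrite -ltnNge.
  have uniq_g : uniq [seq g t | t <- iota 1 m.+1].
    rewrite map_inj_in_uniq ?iota_uniq // => t t'.
    by rewrite !mem_iota !add1n; apply: g_inj.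
  rewrite -[m.+1](size_iota 1) -(size_map g); apply: uniq_leq_size uniq_g _.
  by move=> _ /mapP [t t_in ->]; move/all_in: t_in; rewrite negbK.
have ex_t : exists t, (1 <= t)%N && (g t \notin s).
  have /hasP [t] := avoid; rewrite mem_iota => /andP [t_ge1 _] t_out.
  by exists t; rewrite t_ge1.
have [t0 /andP [t0_ge1 t0_out] t0_min] := ex_minnP ex_t.
exists t0; split => //.
- rewrite t0_ge1; have /hasP [t] := avoid.
  rewrite mem_iota add1n => /andP [t_ge1 t_le] t_out.
  by apply: leq_trans (t0_min t _) t_le; rewrite t_ge1.
- move=> t t_ge1 t_lt; apply: contraLR t_lt => t_out.
  by rewrite -leqNgt t0_min // t_ge1.
Qed.

Section SequentialExistence.
Variables (d n : nat) (r : 'I_n -> nat -> site d).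
Hypothesis r_inj : forall (i : 'I_n) t t',
  (1 <= t <= n)%N -> (1 <= t' <= n)%N -> r i t = r i t' -> t = t'.

Definition sequential_upto (k : nat) (tau : 'I_n -> nat) : Prop :=
  forall i : 'I_n, (i < k)%N ->
    (tau i <= i.+1)%N /\
    ((1 <= tau i)%N /\
     (forall j : 'I_n, (j < i)%N -> r i (tau i) <> label r tau j) /\
     (forall t, (1 <= t)%N -> (t < tau i)%N ->
        exists j : 'I_n, (j < i)%N /\ r i t = label r tau j)).

Lemma sequential_upto_step (k : nat) (tau : 'I_n -> nat) : (k < n)%N ->
  sequential_upto k tau -> exists tau', sequential_upto k.+1 tau'.
Proof.
move=> k_lt tau_k; pose kk : 'I_n := Ordinal k_lt.
pose s := [seq label r tau j | j <- [seq j : 'I_n <- enum 'I_n | (j < k)%N]].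
have size_s : (size s <= k)%N.
  have sub_iota : {subset [seq val j | j <- [seq j : 'I_n <- enum 'I_n | (j < k)%N]]
                    <= iota 0 k}.
    by move=> x /mapP [j]; rewrite mem_filter mem_iota => /andP [j_lt _] ->.
  have := uniq_leq_size _ sub_iota.
  rewrite (map_inj_uniq val_inj) filter_uniq ?enum_uniq //.
  by rewrite size_map size_iota size_map; apply.
have mem_s x : reflect (exists2 j : 'I_n, (j < k)%N & x = label r tau j) (x \in s).
  apply: (iffP mapP) => [] [j j_in ->]; exists j => //.
    by move: j_in; rewrite mem_filter => /andP [].
  by rewrite mem_filter mem_enum andbT.
have kk_inj t t' : (1 <= t <= k.+1)%N -> (1 <= t' <= k.+1)%N ->
    r kk t = r kk t' -> t = t'.
  by move=> /andP [t1 t2] /andP [t1' t2']; apply: r_inj;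
    rewrite ?t1 ?t1' (leq_trans _ k_lt).
have [t0 [/andP [t0_ge1 t0_le] t0_out t0_min]] := exists_first_notin kk_inj size_s.
exists (fun j => if j == kk then t0 else tau j) => i; rewrite ltnS leq_eqVlt.
have lbl (j : 'I_n) : (j < k)%N ->
    label r (fun j => if j == kk then t0 else tau j) j = label r tau j.
  by move=> j_lt; rewrite /label -val_eqE /= (ltn_eqF j_lt).
case/orP => [/eqP i_k | i_lt].
  have -> : i = kk by apply: val_inj.
  rewrite eqxx; do 2!split => //; split => [j j_lt | t t_ge1 t_lt].
    by rewrite lbl // => r_eq; move/negP: t0_out; apply; apply/mem_s; exists j.
  by have /mem_s [j j_lt ->] := t0_min t t_ge1 t_lt; exists j; rewrite lbl.
have [tau_le [tau_ge1 [tau_new tau_old]]] := tau_k i i_lt.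
rewrite -val_eqE /= (ltn_eqF i_lt); do 2!split => //; split => [j j_lt | t t1 t2].
  by rewrite lbl ?(ltn_trans j_lt) //; exact: tau_new.
have [j [j_lt ->]] := tau_old t t1 t2.
by exists j; split; rewrite // lbl ?(ltn_trans j_lt).
Qed.

Lemma sequential_exists : exists tau, sequential_upto n tau.
Proof.
suff: forall k, (k <= n)%N -> exists tau, sequential_upto k tau by apply.
elim=> [_ | k IH k_lt]; first by exists (fun _ => 0%N).
by have [tau tau_k] := IH (ltnW k_lt); apply: sequential_upto_step tau_k.
Qed.
End SequentialExistence.

Lemma in_cluster_path (d n : nat) (r : 'I_n -> nat -> site d) (tau : 'I_n -> nat)
  (i : 'I_n) (t : nat) : (1 <= t <= tau i)%N -> in_cluster r tau (r i t).
Proof. by move=> t_in; exists i, t. Qed.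

Lemma singly_occupied_label_inj (d n : nat) (r : 'I_n -> nat -> site d)
  (tau : 'I_n -> nat) :
  (forall i, (1 <= tau i)%N) -> singly_occupied r tau -> injective (label r tau).
Proof.
move=> tau_ge1 tau_so i j lbl_eq.
have lbl_in : in_cluster r tau (label r tau i).
  by apply: in_cluster_path; rewrite tau_ge1 leqnn.
have [k [_ k_uniq]] := tau_so _ lbl_in.
by rewrite -(k_uniq i erefl) (k_uniq j lbl_eq).
Qed.

Section Sequential.
Variables (d n : nat) (r : 'I_n -> nat -> site d) (tau : 'I_n -> nat).
Hypothesis tau_seq : sequential r tau.

Lemma sequential_label_inj : injective (label r tau).
Proof.
move=> i j lbl_eq; case: (ltngtP i j) => [i_lt | j_lt | /val_inj //].
- by have [_ [lbl_new _]] := tau_seq j; case: (lbl_new i i_lt).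
- by have [_ [lbl_new _]] := tau_seq i; case: (lbl_new j j_lt).
Qed.

Lemma sequential_well_ordered : well_ordered r tau.
Proof.
move=> i j t t_ge1 t_lt lbl_eq; have [_ [_ lbl_old]] := tau_seq i.
have [k [k_lt r_eq]] := lbl_old t t_ge1 t_lt.
by rewrite (sequential_label_inj (etrans lbl_eq r_eq)).
Qed.

Lemma sequential_singly_occupied : singly_occupied r tau.
Proof.
move=> x [i [t [/andP [t_ge1 t_le] ->]]].
have [j r_eq] : exists j, r i t = label r tau j.
  move: t_le; rewrite leq_eqVlt => /orP [/eqP -> | t_lt]; first by exists i.
  have [_ [_ lbl_old]] := tau_seq i.
  by have [k [_ r_eq]] := lbl_old t t_ge1 t_lt; exists k.
by exists j; split => // k r_eq'; apply: sequential_label_inj; rewrite -r_eq -r_eq'.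
Qed.

Lemma sequential_unique (tau' : 'I_n -> nat) :
  (forall i, (1 <= tau' i)%N) -> well_ordered r tau' -> singly_occupied r tau' ->
  tau' =1 tau.
Proof.
move=> tau'_ge1 tau'_wo tau'_so.
suff agree k (i : 'I_n) : (i < k)%N -> tau' i = tau i by move=> i; apply: (agree i.+1).
elim: k i => [//|k IH] i i_lt.
have lbl_below (j : 'I_n) : (j < i)%N -> label r tau' j = label r tau j.
  by move=> j_lt; rewrite /label IH // (leq_trans j_lt).
have [tau_ge1 [lbl_new lbl_old]] := tau_seq i.
case: (ltngtP (tau' i) (tau i)) => // [tau'_lt | tau_lt].
  have [j [j_lt r_eq]] := lbl_old _ (tau'_ge1 i) tau'_lt.
  have lbl_eq : label r tau' i = label r tau' j by rewrite (lbl_below j j_lt).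
  have eq_ij := singly_occupied_label_inj tau'_ge1 tau'_so lbl_eq.
  by move: j_lt; rewrite -eq_ij ltnn.
have site_in : in_cluster r tau' (r i (tau i)).
  by apply: in_cluster_path; rewrite tau_ge1 ltnW.
have [y [r_eq _]] := tau'_so _ site_in.
have y_lt := tau'_wo i y (tau i) tau_ge1 tau_lt (esym r_eq).
by case: (lbl_new y y_lt); rewrite r_eq lbl_below.
Qed.
End Sequential.

Theorem mainTheorem9 (d n : nat) (L : 'I_n -> nat)
  (r : 'I_n -> nat -> site d) :
  (1 <= n)%N ->
  (forall i, (n <= L i)%N) ->
  (forall i, is_path (r i) (L i)) ->
  exists tau : 'I_n -> nat,
    [/\ is_config L tau, well_ordered r tau, singly_occupied r tau,
        sequential r tau &
        forall tau' : 'I_n -> nat,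
          is_config L tau' -> well_ordered r tau' -> singly_occupied r tau' ->
          forall i, tau' i = tau i].
Proof.
move=> _ n_le_L paths.
have r_inj (i : 'I_n) t t' :
    (1 <= t <= n)%N -> (1 <= t' <= n)%N -> r i t = r i t' -> t = t'.
  move=> /andP [t_ge1 t_le] /andP [t'_ge1 t'_le]; have [_ [_ path_inj]] := paths i.
  by apply: path_inj; rewrite ?t_ge1 ?t'_ge1 (leq_trans _ (n_le_L i)).
have [tau tau_upto] := sequential_exists r_inj.
have tau_seq : sequential r tau by move=> i; have [_ seq_i] := tau_upto i (ltn_ord i).
exists tau; split => //.
- move=> i; have [tau_le [tau_ge1 _]] := tau_upto i (ltn_ord i).
  by rewrite tau_ge1 (leq_trans tau_le (leq_trans (ltn_ord i) (n_le_L i))).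
- exact: sequential_well_ordered.
- exact: sequential_singly_occupied.
- move=> tau' tau'_config tau'_wo tau'_so; apply: sequential_unique => // i.
  by have /andP [] := tau'_config i.
Qed.
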